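(* Let $\Bbbk$ be a field of characteristic $0$, $\mathrm{Var}$ a variety of algebras defined by multilinear identities, and let $f=f(x_1,\dots,x_n)\in\mathrm{DiAlg0}\langle X\rangle$ be multilinear with $f=\Psi^{x_j}(\bar f)$ for some $j$. Then $f\in T_0(\mathrm{DiVar})$ if and only if $\bar f\in T_0(\mathrm{Var})$.
   Context: $\mathrm{Alg}\langle X\rangle$ is the free nonassociative algebra on a countable set $X=\{x_1,x_2,\dots\}$; $T_0(\mathrm{Var})$ is the set of multilinear elements of $\mathrm{Alg}\langle X\rangle$ vanishing identically on all algebras of $\mathrm{Var}$. A 0-dialgebra is a vector space with bilinear $\vdash,\dashv$ satisfying $(x\dashv y)\vdash z=(x\vdash y)\vdash z$, $x\dashv(y\vdash z)=x\dashv(y\dashv z)$; $\mathrm{DiAlg0}\langle X\rangle$ is the free 0-dialgebra. For $f\in\mathrm{DiAlg0}\langle X\rangle$, $\bar f\in\mathrm{Alg}\langle X\rangle$ is obtained by identifying $\vdash$ and $\dashv$ with the ordinary product. For a multilinear $g\in\mathrm{Alg}\langle X\rangle$ containing $x_i$, $\Psi^{x_i}(g)$ is obtained by replacing each product $uv$ in each monomial by $u\dashv v$ if $x_i$ occurs in $u$ and by $u\vdash v$ otherwise. $\mathrm{DiVar}$ is the class of 0-dialgebras satisfying $\Psi^{x_i}(g)=0$ for all $g\in T_0(\mathrm{Var})$ of degree $n$ and all $i=1,\dots,n$. $T_0(\mathrm{DiVar})$ is the set of multilinear elements of $\mathrm{DiAlg0}\langle X\rangle$ vanishing identically on all dialgebras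 in $\mathrm{DiVar}$. *)

From HB Require Import structures.
From mathcomp Require Import all_boot all_order all_algebra.
Set Implicit Arguments. Unset Strict Implicit. Unset Printing Implicit Defensive.
Import GRing.Theory.
Local Open Scope ring_scope.

(* Nonassociative monomials in Alg<X>: binary trees, leaf i = variable x_i. *)
Inductive ntree := Leaf of nat | Node of ntree & ntree.
(* Dialgebra monomials: DL u v = u -| v ,  DR u v = u |- v. *)
Inductive dtree := DLeaf of nat | DL of dtree & dtree | DR of dtree & dtree.

Fixpoint leaves (t : ntree) : seq nat :=
  match t with Leaf i => [:: i] | Node u v => leaves u ++ leaves v end.
Fixpoint dleaves (t : dtree) : seq nat :=
  match t with DLeaf i => [:: i] | DL u v => dleaves u ++ dleaves v
             | DR u v => dleaves u ++ dleaves v end.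

(* Elements are represented by finite formal linear combinations of monomials. *)
Definition apoly (K : Type) := seq (K * ntree).
Definition dpoly (K : Type) := seq (K * dtree).

Definition multilin (K : Type) (vs : seq nat) (p : apoly K) : Prop :=
  uniq vs /\ all (fun q => perm_eq (leaves q.2) vs) p.
Definition dmultilin (K : Type) (vs : seq nat) (p : dpoly K) : Prop :=
  uniq vs /\ all (fun q => perm_eq (dleaves q.2) vs) p.

Definition bilinear (K : fieldType) (V : lmodType K) (m : V -> V -> V) : Prop :=
  (forall (a : K) x y z, m (a *: x + y) z = a *: m x z + m y z) /\
  (forall (a : K) x y z, m x (a *: y + z) = a *: m x y + m x z).

Fixpoint evaln (K : fieldType) (V : lmodType K) (m : V -> V -> V)
  (e : nat -> V) (t : ntree) : V :=
  match t with Leaf i => e i | Node u v => m (evaln m e u) (evaln m e v) end.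
Fixpoint evald (K : fieldType) (V : lmodType K) (dl dr : V -> V -> V)
  (e : nat -> V) (t : dtree) : V :=
  match t with DLeaf i => e i
  | DL u v => dl (evald dl dr e u) (evald dl dr e v)
  | DR u v => dr (evald dl dr e u) (evald dl dr e v) end.

Definition evalA (K : fieldType) (V : lmodType K) (m : V -> V -> V)
  (e : nat -> V) (p : apoly K) : V := \sum_(q <- p) q.1 *: evaln m e q.2.
Definition evalD (K : fieldType) (V : lmodType K) (dl dr : V -> V -> V)
  (e : nat -> V) (p : dpoly K) : V := \sum_(q <- p) q.1 *: evald dl dr e q.2.

Definition dialg0 (K : fieldType) (V : lmodType K) (dl dr : V -> V -> V) : Prop :=
  bilinear dl /\ bilinear dr /\
  (forall x y z, dr (dl x y) z = dr (dr x y) z) /\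
  (forall x y z, dl x (dr y z) = dl x (dl y z)).

(* Equality in the free 0-dialgebra DiAlg0<X> (the relatively free algebra of
   the variety of 0-dialgebras): two formal expressions are equal iff their
   difference is an identity of all 0-dialgebras. *)
Definition dieq (K : fieldType) (f g : dpoly K) : Prop :=
  forall (V : lmodType K) (dl dr : V -> V -> V), dialg0 dl dr ->
  forall e : nat -> V, evalD dl dr e f = evalD dl dr e g.

Fixpoint dbar (t : dtree) : ntree :=
  match t with DLeaf i => Leaf i | DL u v => Node (dbar u) (dbar v)
             | DR u v => Node (dbar u) (dbar v) end.
Definition bar (K : Type) (f : dpoly K) : apoly K := [seq (q.1, dbar q.2) | q <- f].

Fixpoint psit (i : nat) (t : ntree) : dtree :=
  match t with Leaf k => DLeaf k
  | Node u v => if i \in leaves u then DL (psit i u) (psit i v)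
                else DR (psit i u) (psit i v) end.
Definition Psi (K : Type) (i : nat) (g : apoly K) : dpoly K :=
  [seq (q.1, psit i q.2) | q <- g].

Definition inVar (K : fieldType) (S : apoly K -> Prop)
  (V : lmodType K) (m : V -> V -> V) : Prop :=
  bilinear m /\ forall s, S s -> forall e : nat -> V, evalA m e s = 0.

Definition T0Var (K : fieldType) (S : apoly K -> Prop) (g : apoly K) : Prop :=
  (exists vs, multilin vs g) /\
  forall (V : lmodType K) (m : V -> V -> V), inVar S m ->
  forall e : nat -> V, evalA m e g = 0.

Definition inDiVar (K : fieldType) (S : apoly K -> Prop)
  (V : lmodType K) (dl dr : V -> V -> V) : Prop :=
  dialg0 dl dr /\
  forall (g : apoly K) (vs : seq nat), multilin vs g -> T0Var S g ->
  forall i, i \in vs -> forall e : nat -> V, evalD dl dr e (Psi i g) = 0.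

Definition T0DiVar (K : fieldType) (S : apoly K -> Prop) (f : dpoly K) : Prop :=
  (exists vs, dmultilin vs f) /\
  forall (V : lmodType K) (dl dr : V -> V -> V), inDiVar S dl dr ->
  forall e : nat -> V, evalD dl dr e f = 0.

(* An algebra (V, m) of Var becomes the 0-dialgebra (V, m, m) of DiVar, on which
   f evaluates as bar f; hence f in T_0(DiVar) forces bar f in T_0(Var).
   Conversely, f = Psi^{x_j}(bar f) in the free 0-dialgebra, and Psi^{x_j}(bar f)
   vanishes on DiVar by the very definition of DiVar once bar f is in T_0(Var). *)
From Pilot Require Import Defs.
From mathcomp Require Import all_boot all_order all_algebra.
Set Implicit Arguments. Unset Strict Implicit. Unset Printing Implicit Defensive.

Local Open Scope ring_scope.

Section DiagonalDialgebra.

Variables (K : fieldType) (V : lmodType K) (m : V -> V -> V).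

Lemma evald_diag_dbar e t : evald m m e t = evaln m e (dbar t).
Proof. by elim: t => //= u -> v ->. Qed.

Lemma evald_diag_psit e i t : evald m m e (psit i t) = evaln m e t.
Proof. by elim: t => //= u IHu v IHv; case: ifP => _ /=; rewrite IHu IHv. Qed.

Lemma evalD_diag_bar e (f : dpoly K) : evalD m m e f = evalA m e (bar f).
Proof.
by rewrite /evalD /evalA big_map; apply: eq_bigr => q _; rewrite evald_diag_dbar.
Qed.

Lemma evalD_diag_Psi e i (g : apoly K) : evalD m m e (Psi i g) = evalA m e g.
Proof.
by rewrite /evalD /evalA big_map; apply: eq_bigr => q _; rewrite evald_diag_psit.
Qed.

(* Qualified: ssralg's [bilinear] shadows the one of Defs. *)
Lemma dialg0_diag : Defs.bilinear m -> dialg0 m m.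
Proof. by move=> m_bilin; split; last split. Qed.

Lemma inDiVar_diag (S : apoly K -> Prop) : inVar S m -> inDiVar S m m.
Proof.
move=> m_Var; split; first by case: m_Var => m_bilin _; apply: dialg0_diag.
by move=> g vs _ [_ g_id] i _ e; rewrite evalD_diag_Psi; apply: g_id.
Qed.

End DiagonalDialgebra.

Lemma leaves_dbar t : leaves (dbar t) = dleaves t.
Proof. by elim: t => //= u -> v ->. Qed.

Lemma multilin_bar (K : Type) vs (f : dpoly K) : dmultilin vs f -> multilin vs (bar f).
Proof.
case=> vs_uniq f_ml; split => //; rewrite all_map; apply: sub_all f_ml => q /=.
by rewrite leaves_dbar.
Qed.

Lemma T0Var_bar (K : fieldType) (S : apoly K -> Prop) (f : dpoly K) :
  T0DiVar S f -> T0Var S (bar f).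
Proof.
case=> [[vs f_ml] f_id]; split; first by exists vs; apply: multilin_bar.
by move=> V m m_Var e; rewrite -evalD_diag_bar; apply/f_id/inDiVar_diag.
Qed.

Lemma evalD_Psi_eq0 (K : fieldType) (S : apoly K -> Prop) vs (g : apoly K) i :
  multilin vs g -> i \in vs -> T0Var S g ->
  forall (V : lmodType K) (dl dr : V -> V -> V), inDiVar S dl dr ->
  forall e : nat -> V, evalD dl dr e (Psi i g) = 0.
Proof.
by move=> g_ml vs_i g_T0 V dl dr [_ DiVar_id] e; exact: DiVar_id g_ml g_T0 i vs_i e.
Qed.

Theorem mainTheorem12 (K : fieldType) (S : apoly K -> Prop) (n : nat)
  (f : dpoly K) (j : nat) :
  [pchar K]%R =i pred0 ->
  (forall s, S s -> exists vs, multilin vs s) ->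
  dmultilin (iota 1 n) f ->
  (1 <= j <= n)%N ->
  dieq f (Psi j (bar f)) ->
  (T0DiVar S f <-> T0Var S (bar f)).
Proof.
move=> _ _ f_ml j_range f_eq; split; first exact: T0Var_bar.
move=> bar_T0; split; first by exists (iota 1 n).
have j_var : j \in iota 1 n by rewrite mem_iota addnC addn1 ltnS.
move=> V dl dr DiVar_dl_dr e; have [dialg0_dl_dr _] := DiVar_dl_dr.
rewrite (f_eq V dl dr dialg0_dl_dr e).
exact: (evalD_Psi_eq0 (multilin_bar f_ml) j_var bar_T0 DiVar_dl_dr).
Qed.
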